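(* Let $p,l$ be distinct odd primes and let $\Gamma=\psi(\tilde\Gamma)$ be the group described in the context. If $\Gamma_1$ and $\Gamma_2$ are maximal abelian subgroups of $\Gamma$ with $\Gamma_1\neq\Gamma_2$, then $\Gamma_1\cap\Gamma_2=\{1\}$.
   Context: Let $p,l$ be distinct odd primes. Let $\mathbb H(\mathbb Z)$ be the ring of quaternions $x=x_0+x_1i+x_2j+x_3k$ with $x_0,\dots,x_3\in\mathbb Z$, where $i^2=j^2=k^2=-1$, $ij=-ji=k$; write $|x|^2=x_0^2+x_1^2+x_2^2+x_3^2$. Fix $c_p,d_p\in\mathbb Q_p$ with $c_p^2+d_p^2+1=0$ and $c_l,d_l\in\mathbb Q_l$ with $c_l^2+d_l^2+1=0$. Define $\psi:\mathbb H(\mathbb Z)\setminus\{0\}\to G:=PGL_2(\mathbb Q_p)\times PGL_2(\mathbb Q_l)$ by sending $x$ to the class of the pair $\left(\begin{pmatrix} x_0+x_1c_p+x_3d_p & -x_1d_p+x_2+x_3c_p\\ -x_1d_p-x_2+x_3c_p & x_0-x_1c_p-x_3d_p\end{pmatrix},\begin{pmatrix} x_0+x_1c_l+x_3d_l & -x_1d_l+x_2+x_3c_l\\ -x_1d_l-x_2+x_3c_l & x_0-x_1c_l-x_3d_l\end{pmatrix}\right)$. Let $\tilde\Gamma$ be the set of $x\in\mathbb H(\mathbb Z)$ such that $|x|^2=p^rl^s$ for some integers $r,s\ge 0$, and such that $x_0$ is odd and $x_1,x_2,x_3$ are even if $|x|^2\equiv 1\pmod 4$, while $x_1$ is even and $x_0,x_2,x_3$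 are odd if $|x|^2\equiv 3\pmod 4$. Then $\Gamma=\psi(\tilde\Gamma)$ is a torsion-free cocompact lattice in $G$. *)

From HB Require Import structures.
From mathcomp Require Import all_boot all_order all_algebra.
Set Implicit Arguments. Unset Strict Implicit. Unset Printing Implicit Defensive.
Import Order.TTheory GRing.Theory Num.Theory.
Local Open Scope ring_scope.

Definition mx2 (K : fieldType) (a b c d : K) : 'M[K]_2 :=
  \matrix_(i < 2, j < 2)
    if val i == 0%N then (if val j == 0%N then a else b)
    else (if val j == 0%N then c else d).

(* The matrix attached to the integral quaternion x0 + x1 i + x2 j + x3 k
   using c, d with c^2 + d^2 + 1 = 0 (one component of psi). *)
Definition psi1 (K : fieldType) (c d : K) (x0 x1 x2 x3 : int) : 'M[K]_2 :=
  let y0 : K := x0%:~R in let y1 : K := x1%:~R in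
  let y2 : K := x2%:~R in let y3 : K := x3%:~R in
  mx2 (y0 + y1 * c + y3 * d) (- (y1 * d) + y2 + y3 * c)
      (- (y1 * d) - y2 + y3 * c) (y0 - y1 * c - y3 * d).

Definition in_tGamma (p l : nat) (x0 x1 x2 x3 : int) : Prop :=
  exists r s : nat,
    x0 ^+ 2 + x1 ^+ 2 + x2 ^+ 2 + x3 ^+ 2 = ((p ^ r * l ^ s)%N)%:Z /\
    (((p ^ r * l ^ s) %% 4)%N = 1%N ->
       [/\ odd `|x0|%N, ~~ odd `|x1|%N, ~~ odd `|x2|%N & ~~ odd `|x3|%N]) /\
    (((p ^ r * l ^ s) %% 4)%N = 3%N ->
       [/\ ~~ odd `|x1|%N, odd `|x0|%N, odd `|x2|%N & odd `|x3|%N]).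

(* Elements of PGL_2(Kp) x PGL_2(Kl) are represented by pairs of matrices;
   two representatives give the same element iff they agree up to nonzero
   scalars in each component. *)
Definition GG (Kp Kl : fieldType) := ('M[Kp]_2 * 'M[Kl]_2)%type.

Definition proj_eq (Kp Kl : fieldType) (g h : GG Kp Kl) : Prop :=
  exists (a : Kp) (b : Kl),
    [/\ a != 0, b != 0, g.1 = a *: h.1 & g.2 = b *: h.2].

Definition gmul (Kp Kl : fieldType) (g h : GG Kp Kl) : GG Kp Kl :=
  (g.1 *m h.1, g.2 *m h.2).
Definition ginv (Kp Kl : fieldType) (g : GG Kp Kl) : GG Kp Kl :=
  (invmx g.1, invmx g.2).
Definition gone (Kp Kl : fieldType) : GG Kp Kl := (1%:M, 1%:M).

(* Gamma = psi(\tilde\Gamma), as a (projectively saturated) set of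
   representatives. *)
Definition Gamma (p l : nat) (Kp Kl : fieldType) (cp dp : Kp) (cl dl : Kl)
  (g : GG Kp Kl) : Prop :=
  exists x0 x1 x2 x3 : int, in_tGamma p l x0 x1 x2 x3 /\
    proj_eq g (psi1 cp dp x0 x1 x2 x3, psi1 cl dl x0 x1 x2 x3).

Definition is_subgroup (Kp Kl : fieldType) (G H : GG Kp Kl -> Prop) : Prop :=
  [/\ (forall g, H g -> G g),
      (forall g h, H g -> proj_eq g h -> H h),
      H (gone Kp Kl),
      (forall g h, H g -> H h -> H (gmul g h)) &
      (forall g, H g -> H (ginv g))].

Definition is_abelian (Kp Kl : fieldType) (H : GG Kp Kl -> Prop) : Prop :=
  forall g h, H g -> H h -> proj_eq (gmul g h) (gmul h g).

Definition maximal_abelian (Kp Kl : fieldType) (G H : GG Kp Kl -> Prop) : Prop :=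
  [/\ is_subgroup G H, is_abelian H &
      forall H', is_subgroup G H' -> is_abelian H' ->
        (forall g, H g -> H' g) -> forall g, H' g -> H g].

From HB Require Import structures.
From mathcomp Require Import all_boot all_order all_algebra.
From mathcomp Require Import zify ring.
Import Order.TTheory GRing.Theory Num.Theory.
Local Open Scope ring_scope.
Set Implicit Arguments. Unset Strict Implicit.

(* Every g in Gamma is psi(z) for some z in \tilde\Gamma. If z is real, then
   g = 1. Otherwise let H be an abelian subgroup of Gamma containing g and
   psi(x) in H. Then psi(xz) and psi(zx) differ by a scalar, which is 1
   because xz and zx have the same odd real part, and psi is injective on
   quaternions, so xz = zx. Quaternions commuting with the non-real z have
   imaginary parts proportional to that of z, hence commute with each other:
   they form an abelian subgroup of Gamma containing every abelian subgroup
   through g. By maximality both G1 and G2 equal it. *)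

Record quat := Quat { q0 : int; q1 : int; q2 : int; q3 : int }.

Definition qmul (x y : quat) : quat :=
  Quat (q0 x * q0 y - q1 x * q1 y - q2 x * q2 y - q3 x * q3 y)
       (q0 x * q1 y + q1 x * q0 y + q2 x * q3 y - q3 x * q2 y)
       (q0 x * q2 y - q1 x * q3 y + q2 x * q0 y + q3 x * q1 y)
       (q0 x * q3 y + q1 x * q2 y - q2 x * q1 y + q3 x * q0 y).
Definition qconj (x : quat) : quat := Quat (q0 x) (- q1 x) (- q2 x) (- q3 x).
Definition qreal (z : int) : quat := Quat z 0 0 0.
Definition qnorm (x : quat) : int := q0 x ^+ 2 + q1 x ^+ 2 + q2 x ^+ 2 + q3 x ^+ 2.
Definition qim (x : quat) (i : nat) : int :=
  match i with 0 => q1 x | 1 => q2 x | _ => q3 x end.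

Lemma quat_eq x y :
  q0 x = q0 y -> q1 x = q1 y -> q2 x = q2 y -> q3 x = q3 y -> x = y.
Proof. by case: x; case: y => /= ? ? ? ? ? ? ? ? -> -> -> ->. Qed.

Lemma qmulA x y z : qmul x (qmul y z) = qmul (qmul x y) z.
Proof. by apply: quat_eq => /=; ring. Qed.

Lemma qmulq1 x : qmul x (qreal 1) = x.
Proof. by apply: quat_eq => /=; ring. Qed.

Lemma qmul1q x : qmul (qreal 1) x = x.
Proof. by apply: quat_eq => /=; ring. Qed.

Lemma qmul_conj x : qmul x (qconj x) = qreal (qnorm x).
Proof. by apply: quat_eq => /=; rewrite /qnorm; ring. Qed.

Lemma qnormM x y : qnorm (qmul x y) = qnorm x * qnorm y.
Proof. by rewrite /qnorm /=; ring. Qed.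

Lemma qnorm_conj x : qnorm (qconj x) = qnorm x.
Proof. by rewrite /qnorm /=; ring. Qed.

Lemma qim_conj x i : qim (qconj x) i = - qim x i.
Proof. by case: i => [|[|i]]. Qed.

Lemma quat_real_or_im z : z = qreal (q0 z) \/ exists k, qim z k != 0.
Proof.
case: z => z0 z1 z2 z3; rewrite /qreal /=.
have [->|] := eqVneq z1 0; last by right; exists 0%N.
have [->|] := eqVneq z2 0; last by right; exists 1%N.
have [->|] := eqVneq z3 0; last by right; exists 2%N.
by left.
Qed.

Lemma proportional_trans (R : idomainType) (I : Type) (x y z : I -> R) k :
  z k != 0 ->
  (forall i j, x i * z j = x j * z i) -> (forall i j, y i * z j = y j * z i) ->
  forall i j, x i * y j = x j * y i.
Proof.
move=> zk0 xz yz i j; apply/eqP; rewrite -subr_eq0 -(mulrI_eq0 _ (mulfI zk0)).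
have -> : z k * (x i * y j - x j * y i) =
  y j * (x i * z k - x k * z i) + x k * (y j * z i - y i * z j)
  + y i * (x k * z j - x j * z k) by ring.
by rewrite xz yz (xz k j) !subrr !mulr0 !addr0.
Qed.

Lemma qcommuteP x y :
  qmul x y = qmul y x <-> forall i j, qim x i * qim y j = qim x j * qim y i.
Proof.
split=> [xy|xy].
  move: (congr1 q1 xy) (congr1 q2 xy) (congr1 q3 xy) => /= e1 e2 e3.
  by case=> [|[|i]] [|[|j]] /=; lia.
move: (xy 1%N 2%N) (xy 2%N 0%N) (xy 0%N 1%N) => /= e1 e2 e3.
by apply: quat_eq => /=; lia.
Qed.

Lemma qcommute_trans x y z k : qim z k != 0 ->
  qmul x z = qmul z x -> qmul y z = qmul z y -> qmul x y = qmul y x.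
Proof.
move=> zk0 /qcommuteP xz /qcommuteP yz; apply/qcommuteP.
exact: proportional_trans zk0 xz yz.
Qed.

Lemma qcommute_conj x z : qmul x z = qmul z x -> qmul (qconj x) z = qmul z (qconj x).
Proof.
move=> /qcommuteP xz; apply/qcommuteP => i j.
by rewrite !qim_conj !mulNr xz.
Qed.

(* The two parity patterns of \tilde\Gamma together; the norm modulo 4 tells
   which one occurs (qnorm_admissible). *)
Definition admissible (x : quat) : bool :=
  [&& odd `|q0 x|, ~~ odd `|q1 x| & odd `|q2 x| == odd `|q3 x|].

Lemma odd_abszD (x y : int) : odd `|x + y| = odd `|x| (+) odd `|y|.
Proof. lia. Qed.

Lemma admissibleM x y : admissible x -> admissible y -> admissible (qmul x y).
Proof.
rewrite /admissible /= !odd_abszD !abszN !abszM !oddM.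
case/and3P=> -> /negbTE-> /eqP->; case/and3P=> -> /negbTE-> /eqP->.
by case: (odd `|q3 x|); case: (odd `|q3 y|).
Qed.

Lemma admissible_conj x : admissible (qconj x) = admissible x.
Proof. by rewrite /admissible /= !abszN. Qed.

Lemma sqrz_mod4 (z : int) : exists k, z ^+ 2 = 4 * k + (odd `|z|)%:R.
Proof.
have [m [->|->]] : exists m, z = 2 * m \/ z = 2 * m + 1 by exists (divz z 2); lia.
  have -> : odd `|2 * m| = false by lia.
  by exists (m ^+ 2); rewrite /=; ring.
have -> : odd `|2 * m + 1| by lia.
by exists (m ^+ 2 + m); rewrite /=; ring.
Qed.

Lemma qnorm_admissible x : admissible x ->
  exists k, qnorm x = 4 * k + (if odd `|q2 x| then 3 else 1).
Proof.
move: (sqrz_mod4 (q0 x)) (sqrz_mod4 (q1 x)) (sqrz_mod4 (q2 x)) (sqrz_mod4 (q3 x)).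
move=> [k0 e0] [k1 e1] [k2 e2] [k3 e3]; rewrite /qnorm e0 e1 e2 e3.
case/and3P=> -> /negbTE-> /eqP<-.
by exists (k0 + k1 + k2 + k3); case: (odd `|q2 x|) => /=; ring.
Qed.

Lemma admissible_qnorm_odd x : admissible x -> odd `|qnorm x|.
Proof. by case/qnorm_admissible=> k ->; case: (odd `|q2 x|); lia. Qed.

Definition tGamma (p l : nat) (x : quat) : Prop :=
  in_tGamma p l (q0 x) (q1 x) (q2 x) (q3 x).

Section TildeGamma.

Variables p l : nat.
Hypotheses (p_odd : odd p) (l_odd : odd l).

Lemma tGammaE x :
  tGamma p l x <-> (exists r s : nat, qnorm x = (p ^ r * l ^ s)%N) /\ admissible x.
Proof.
split.
  case=> r [s [nx [mod1 mod3]]]; split; first by exists r, s.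
  have n_odd : odd (p ^ r * l ^ s) by rewrite oddM !oddX p_odd l_odd !orbT.
  have [|] : ((p ^ r * l ^ s) %% 4 = 1 \/ (p ^ r * l ^ s) %% 4 = 3)%N by lia.
    by case/mod1=> o0 e1 e2 e3; rewrite /admissible o0 e1 (negbTE e2) (negbTE e3).
  by case/mod3=> e1 o0 o2 o3; rewrite /admissible o0 e1 o2 o3.
case=> [[r [s nx]] adm]; exists r, s; split=> //.
have [k nk] := qnorm_admissible adm.
case/and3P: adm => o0 e1 /eqP e23; rewrite -e23.
by case: (odd `|q2 x|) nk => nk; split=> // mod_n; exfalso; lia.
Qed.

Lemma tGamma_admissible x : tGamma p l x -> admissible x.
Proof. by case/tGammaE. Qed.

Lemma tGamma1 : tGamma p l (qreal 1).
Proof. by apply/tGammaE; split=> //; exists 0%N, 0%N. Qed.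

Lemma tGammaM x y : tGamma p l x -> tGamma p l y -> tGamma p l (qmul x y).
Proof.
case/tGammaE=> [[r [s nx]] ax] /tGammaE[[r' [s' ny]] ay].
apply/tGammaE; split; last exact: admissibleM.
exists (r + r')%N, (s + s')%N; rewrite qnormM nx ny -PoszM !expnD; congr Posz; lia.
Qed.

Lemma tGamma_conj x : tGamma p l x -> tGamma p l (qconj x).
Proof. by case/tGammaE=> nx ax; apply/tGammaE; rewrite qnorm_conj admissible_conj. Qed.

End TildeGamma.

Lemma oddz_neq0 (z : int) : odd `|z| -> z != 0.
Proof. by case: eqP => // ->. Qed.

Lemma intr_eq0_char0 (K : idomainType) (z : int) :
  [pchar K] =i pred0 -> (z%:~R == 0 :> K) = (z == 0).
Proof.
move=> /pcharf0P char0; case: z => n; first by rewrite char0.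
by rewrite NegzE intrN oppr_eq0 char0.
Qed.

Section QuaternionMatrices.

Variables (K : fieldType) (c d : K).
Hypothesis cd1 : c ^+ 2 + d ^+ 2 + 1 = 0.
Hypothesis char0 : [pchar K] =i pred0.

Definition qmx (x : quat) : 'M[K]_2 := psi1 c d (q0 x) (q1 x) (q2 x) (q3 x).

Lemma qmxM x y : qmx x *m qmx y = qmx (qmul x y).
Proof.
apply/matrixP=> i j; rewrite !mxE !big_ord_recr big_ord0 /= !mxE add0r.
case: x y => x0 x1 x2 x3 [y0 y1 y2 y3] /=; rewrite !(intrD, intrN, intrM).
set X1 : K := x1%:~R; set X3 : K := x3%:~R; set Y1 : K := y1%:~R; set Y3 : K := y3%:~R.
have vanish (u v : K) : v = u * (c ^+ 2 + d ^+ 2 + 1) -> v = 0 by rewrite cd1 mulr0.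
apply/eqP; rewrite -subr_eq0; apply/eqP.
case: i j => [[|[|//]] _] [[|[|//]] _] /=.
- by apply: (vanish (X1 * Y1 + X3 * Y3)); ring.
- by apply: (vanish (X1 * Y3 - X3 * Y1)); ring.
- by apply: (vanish (X3 * Y1 - X1 * Y3)); ring.
- by apply: (vanish (X1 * Y1 + X3 * Y3)); ring.
Qed.

Lemma qmx_real z : qmx (qreal z) = z%:~R%:M.
Proof.
by apply/matrixP=> i j; rewrite !mxE; case: i j => [[|[|//]] _] [[|[|//]] _] /=; ring.
Qed.

Lemma mxtrace_qmx x : \tr (qmx x) = 2%:R * (q0 x)%:~R.
Proof. by rewrite /mxtrace !big_ord_recr big_ord0 /= !mxE /=; ring. Qed.

Lemma qmx_coords x (M := qmx x) :
  [/\ M 0 0 + M 1 1 = 2%:R * (q0 x)%:~R,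
      d * (M 0 1 + M 1 0) - c * (M 0 0 - M 1 1) = 2%:R * (q1 x)%:~R,
      M 0 1 - M 1 0 = 2%:R * (q2 x)%:~R &
      - (d * (M 0 0 - M 1 1) + c * (M 0 1 + M 1 0)) = 2%:R * (q3 x)%:~R].
Proof.
rewrite /M !mxE /=; set X1 : K := (q1 x)%:~R; set X3 : K := (q3 x)%:~R.
have via_cd1 (X u : K) : u = 2%:R * X - 2%:R * X * (c ^+ 2 + d ^+ 2 + 1) -> u = 2%:R * X.
  by rewrite cd1 mulr0 subr0.
by split; [ring | apply: via_cd1; ring | ring | apply: via_cd1; ring].
Qed.

Lemma qmx_inj : injective qmx.
Proof.
have two_neq0 : 2%:R != 0 :> K by rewrite (pcharf0P K).1.
have cancel2 (u v : int) : 2%:R * u%:~R = 2%:R * v%:~R :> K -> u = v.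
  move/(mulfI two_neq0)/eqP.
  by rewrite -subr_eq0 -intrB intr_eq0_char0 // subr_eq0 => /eqP.
move=> x y xy; have [a0 a1 a2 a3] := qmx_coords x; have [b0 b1 b2 b3] := qmx_coords y.
rewrite xy in a0 a1 a2 a3.
by apply: quat_eq; apply: cancel2;
  [rewrite -a0 b0 | rewrite -a1 b1 | rewrite -a2 b2 | rewrite -a3 b3].
Qed.

Lemma invmx_qmx x : (qnorm x)%:~R != 0 :> K ->
  invmx (qmx x) = ((qnorm x)%:~R)^-1 *: qmx (qconj x).
Proof.
move=> nx; have inv_r : qmx x *m (((qnorm x)%:~R)^-1 *: qmx (qconj x)) = 1%:M.
  by rewrite -scalemxAr qmxM qmul_conj qmx_real scale_scalar_mx mulVf.
have [ux _] := mulmx1_unit inv_r.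
by rewrite -[LHS]mulmx1 -inv_r mulmxA mulVmx // mul1mx.
Qed.

End QuaternionMatrices.

Lemma invmxZ_proj (K : fieldType) n (a : K) (A : 'M_n) : a != 0 ->
  exists2 b, b != 0 & invmx (a *: A) = b *: invmx A.
Proof.
move=> a0; have [uA|nuA] := boolP (A \in unitmx).
  by exists a^-1; rewrite ?invr_eq0 // invmxZ // unitmxZ ?unitfE.
exists a => //; rewrite !invmx_out // inE.
by rewrite unitmxZ ?unitfE.
Qed.

Section ProjectiveEquality.

Variables Kp Kl : fieldType.
Implicit Types g h : GG Kp Kl.

Lemma proj_eq_sym g h : proj_eq g h -> proj_eq h g.
Proof.
case=> a [b [a0 b0 e1 e2]]; exists a^-1, b^-1.
by rewrite e1 e2 !scalerA !mulVf ?scale1r ?invr_eq0.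
Qed.

Lemma proj_eq_trans g h k : proj_eq g h -> proj_eq h k -> proj_eq g k.
Proof.
case=> a [b [a0 b0 e1 e2]] [a' [b' [a0' b0' e1' e2']]].
by exists (a * a'), (b * b'); rewrite e1 e2 e1' e2' !scalerA !mulf_neq0.
Qed.

Lemma proj_eq_gmul g g' h h' :
  proj_eq g g' -> proj_eq h h' -> proj_eq (gmul g h) (gmul g' h').
Proof.
case=> a [b [a0 b0 e1 e2]] [a' [b' [a0' b0' e1' e2']]].
exists (a * a'), (b * b'); rewrite !mulf_neq0 //= e1 e2 e1' e2'.
by rewrite -!scalemxAl -!scalemxAr !scalerA.
Qed.

Lemma proj_eq_ginv g h : proj_eq g h -> proj_eq (ginv g) (ginv h).
Proof.
case=> a [b [a0 b0 e1 e2]].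
have [a' a'0 inv1] := invmxZ_proj h.1 a0; have [b' b'0 inv2] := invmxZ_proj h.2 b0.
by exists a', b'; rewrite /ginv e1 e2 inv1 inv2.
Qed.

End ProjectiveEquality.

Section Centraliser.

Variables (p l : nat) (Kp Kl : fieldType) (cp dp : Kp) (cl dl : Kl).
Hypotheses (p_odd : odd p) (l_odd : odd l).
Hypotheses (char0p : [pchar Kp] =i pred0) (char0l : [pchar Kl] =i pred0).
Hypotheses (cdp1 : cp ^+ 2 + dp ^+ 2 + 1 = 0) (cdl1 : cl ^+ 2 + dl ^+ 2 + 1 = 0).

Local Notation tG := (tGamma p l).
Local Notation Gam := (Gamma p l cp dp cl dl).

Definition Psi (x : quat) : GG Kp Kl := (qmx cp dp x, qmx cl dl x).

Lemma GammaP g : Gam g <-> exists2 x, tG x & proj_eq g (Psi x).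
Proof.
split; first by case=> x0 [x1 [x2 [x3 [tx gx]]]]; exists (Quat x0 x1 x2 x3).
by case=> x tx gx; exists (q0 x), (q1 x), (q2 x), (q3 x).
Qed.

Lemma gmul_Psi x y : gmul (Psi x) (Psi y) = Psi (qmul x y).
Proof. by rewrite /gmul /Psi /= !qmxM. Qed.

Lemma Psi_real z : z != 0 -> proj_eq (Psi (qreal z)) (gone Kp Kl).
Proof.
by move=> z0; exists z%:~R, z%:~R; rewrite /Psi !qmx_real !scalemx1 !intr_eq0_char0.
Qed.

Lemma ginv_Psi x : tG x -> proj_eq (ginv (Psi x)) (Psi (qconj x)).
Proof.
move/(tGamma_admissible p_odd l_odd)/admissible_qnorm_odd/oddz_neq0 => nx0.
exists ((qnorm x)%:~R)^-1, ((qnorm x)%:~R)^-1.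
by rewrite /ginv /= !invmx_qmx ?invr_eq0 ?intr_eq0_char0.
Qed.

Lemma Psi_commute x z : tG x -> tG z ->
  proj_eq (gmul (Psi x) (Psi z)) (gmul (Psi z) (Psi x)) -> qmul x z = qmul z x.
Proof.
move=> /(tGamma_admissible p_odd l_odd) ax /(tGamma_admissible p_odd l_odd) az.
rewrite !gmul_Psi => -[a [_ [_ _ xz_zx _]]].
have re_odd : odd `|q0 (qmul z x)| by case/and3P: (admissibleM az ax).
have re_eq : q0 (qmul x z) = q0 (qmul z x) by rewrite /=; ring.
have a1 : a = 1.
  (* Compare traces: xz and zx have the same real part, and it is odd. *)
  have := congr1 mxtrace xz_zx; rewrite mxtraceZ !mxtrace_qmx re_eq => tr_eq.
  have re_neq0 : 2%:R * (q0 (qmul z x))%:~R != 0 :> Kp.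
    by rewrite mulf_eq0 negb_or (pcharf0P Kp).1 // intr_eq0_char0 // oddz_neq0.
  by apply: (mulIf re_neq0); rewrite mul1r -tr_eq.
by move: xz_zx; rewrite a1 scale1r => /(qmx_inj cdp1 char0p).
Qed.

Definition cent_Gamma (z : quat) (h : GG Kp Kl) : Prop :=
  exists x, [/\ tG x, proj_eq h (Psi x) & qmul x z = qmul z x].

Lemma cent_Gamma_subgroup z : is_subgroup Gam (cent_Gamma z).
Proof.
split.
- by move=> h [x [tx hx _]]; apply/GammaP; exists x.
- move=> h h' [x [tx hx xz]] hh'; exists x; split=> //.
  exact: proj_eq_trans (proj_eq_sym hh') hx.
- exists (qreal 1); split; first exact: tGamma1.
    exact: proj_eq_sym (Psi_real (oner_neq0 _)).
  by rewrite qmulq1 qmul1q.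
- move=> h h' [x [tx hx xz]] [y [ty hy yz]]; exists (qmul x y); split.
  + exact: tGammaM.
  + by rewrite -gmul_Psi; apply: proj_eq_gmul.
  + by rewrite -qmulA yz qmulA xz -qmulA.
- move=> h [x [tx hx xz]]; exists (qconj x); split.
  + exact: tGamma_conj.
  + exact: proj_eq_trans (proj_eq_ginv hx) (ginv_Psi tx).
  + exact: qcommute_conj.
Qed.

Lemma cent_Gamma_abelian z k : qim z k != 0 -> is_abelian (cent_Gamma z).
Proof.
move=> zk h h' [x [_ hx xz]] [y [_ hy yz]].
apply: proj_eq_trans (proj_eq_gmul hx hy) _.
rewrite gmul_Psi (qcommute_trans zk xz yz) -gmul_Psi.
exact: proj_eq_gmul (proj_eq_sym hy) (proj_eq_sym hx).
Qed.

Lemma abelian_sub_cent_Gamma H g z : is_subgroup Gam H -> is_abelian H ->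
  H g -> tG z -> proj_eq g (Psi z) -> forall h, H h -> cent_Gamma z h.
Proof.
case=> HGam _ _ _ _ Hab Hg tz gz h Hh.
have [x tx hx] := (GammaP h).1 (HGam h Hh).
exists x; split=> //; apply: Psi_commute tx tz _.
apply: proj_eq_trans (proj_eq_gmul (proj_eq_sym hx) (proj_eq_sym gz)) _.
apply: proj_eq_trans (Hab _ _ Hh Hg) _.
exact: proj_eq_gmul.
Qed.

End Centraliser.

Unset Implicit Arguments. Set Strict Implicit.

Theorem lemma2p4 (p l : nat) (Kp Kl : fieldType)
  (hp : prime p) (hl : prime l) (hpo : odd p) (hlo : odd l) (hpl : p != l)
  (chKp : [pchar Kp] =i pred0) (chKl : [pchar Kl] =i pred0)
  (cp dp : Kp) (cl dl : Kl)
  (hcdp : cp ^+ 2 + dp ^+ 2 + 1 = 0) (hcdl : cl ^+ 2 + dl ^+ 2 + 1 = 0)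
  (G1 G2 : GG Kp Kl -> Prop) :
  maximal_abelian (Gamma p l cp dp cl dl) G1 ->
  maximal_abelian (Gamma p l cp dp cl dl) G2 ->
  ~ (forall g, G1 g <-> G2 g) ->
  forall g, G1 g -> G2 g -> proj_eq g (gone Kp Kl).
Proof.
move=> [sub1 ab1 max1] [sub2 ab2 max2] G1_neq_G2 g G1g G2g.
have [G1_Gamma _ _ _ _] := sub1.
have [z tz gz] := (GammaP _ _ _ _ _ _ g).1 (G1_Gamma g G1g).
have [z_real | [k zk]] := quat_real_or_im z.
  apply: proj_eq_trans gz _; rewrite z_real; apply: (Psi_real _ _ _ _ chKp chKl).
  by case/and3P: (tGamma_admissible hpo hlo tz) => /oddz_neq0.
have G1_cent := abelian_sub_cent_Gamma hpo hlo chKp hcdp hcdl sub1 ab1 G1g tz gz.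
have G2_cent := abelian_sub_cent_Gamma hpo hlo chKp hcdp hcdl sub2 ab2 G2g tz gz.
have C_sub := cent_Gamma_subgroup hpo hlo chKp chKl hcdp hcdl z.
have C_ab := cent_Gamma_abelian (p := p) (l := l) hcdp hcdl zk.
have cent_G1 := max1 _ C_sub C_ab G1_cent.
have cent_G2 := max2 _ C_sub C_ab G2_cent.
by case: G1_neq_G2 => h; split=> [/G1_cent/cent_G2 | /G2_cent/cent_G1].
Qed.
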